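(* Let $w \in \mathfrak{S}_n$ and let $\mathbf{2}$ denote the two-element chain. Then $w$ is a prism if and only if there exists a permutation $v \prec w$ (strictly below $w$ in the Bruhat order) with $\textsf{supp}(v) \subsetneq \textsf{supp}(w)$ and $B(w) \cong \mathbf{2} \times B(v)$ as posets. Moreover, for such $v$, one has $\textsf{supp}(w) \setminus \textsf{supp}(v) = \{i\}$ for some $i$, and $v$ is obtained by deleting a copy of the letter $i$ from a reduced word of $w$ (i.e., some reduced word of $v$ is obtained from some reduced word of $w$ by deleting one occurrence of $i$).
   Context: For $1 \le i \le n-1$, $\sigma_i \in \mathfrak{S}_n$ is the simple transposition swapping $i$ and $i+1$; products of permutations are compositions of maps. The length $\ell(w)$ is the minimal number of simple transpositions whose product is $w$. A reduced word of $w$ is a word $i_1 i_2 \cdots i_{\ell(w)}$ with $w = \sigma_{i_1}\cdots\sigma_{i_{\ell(w)}}$; $R(w)$ is the set of reduced words of $w$. The support $\textsf{supp}(w)$ is the set of letters appearing in a reduced word of $w$ (this is independent of the reduced word). The Bruhat order on $\mathfrak{S}_n$: $v \preceq w$ iff some reduced word of $v$ is a subword of some reduced word of $w$; $B(w) = \{v : v \preceq w\}$ is the principal order ideal. A permutation $w$ is a prism if $B(w) \cong B \times X$ for some poset $X$ and some nontrivial boolean algebra $B$ (equivalently, $B(w) \cong \mathbf{2} \times X$ for some poset $X$). *)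

From HB Require Import structures.
From mathcomp Require Import all_boot all_order all_fingroup.
Set Implicit Arguments. Unset Strict Implicit. Unset Printing Implicit Defensive.
Import Order.TTheory.

(* Letters are natural numbers i with 1 <= i <= n-1 (paper's indexing).
   The paper's point i in {1..n} is the ordinal i-1 of 'I_n. *)

(* simple transposition sigma_i : swaps the points i and i+1 (paper),
   i.e. the ordinals i-1 and i.  Only meaningful for 1 <= i <= n-1. *)
Definition stransp (n : nat) : nat -> 'S_n :=
  match n return nat -> 'S_n with
  | 0 => fun _ => 1%g
  | m.+1 => fun i => tperm (inord i.-1 : 'I_m.+1) (inord i)
  end.

Definition is_word (n : nat) (u : seq nat) : bool := all (fun i => 0 < i < n) u.

(* product sigma_{i1} o ... o sigma_{ik} as composition of maps.
   In MathComp, (s * t) x = t (s x), so composition s o t is t * s. *)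
Definition word_perm (n : nat) (u : seq nat) : 'S_n :=
  \prod_(i <- rev u) stransp n i.

Definition reduced_word (n : nat) (w : 'S_n) (u : seq nat) : Prop :=
  is_word n u /\ word_perm n u = w /\
  forall u', is_word n u' -> word_perm n u' = w -> size u <= size u'.

Definition supp (n : nat) (w : 'S_n) (i : nat) : Prop :=
  exists2 u, reduced_word w u & i \in u.

Definition bruhat_le (n : nat) (v w : 'S_n) : Prop :=
  exists u, exists u', [/\ reduced_word v u, reduced_word w u' & subseq u u'].

Definition bruhat_lt (n : nat) (v w : 'S_n) : Prop := v <> w /\ bruhat_le v w.

Definition Bideal (n : nat) (w : 'S_n) : Type := {v : 'S_n | bruhat_le v w}.
Definition Bideal_le (n : nat) (w : 'S_n) (x y : Bideal w) : Prop :=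
  bruhat_le (proj1_sig x) (proj1_sig y).

Definition order_iso (A B : Type) (leA : A -> A -> Prop) (leB : B -> B -> Prop)
  : Prop :=
  exists f : A -> B, bijective f /\ forall x y, leA x y <-> leB (f x) (f y).

Definition prod_le (A B : Type) (leA : A -> A -> Prop) (leB : B -> B -> Prop)
  (p q : A * B) : Prop := leA p.1 q.1 /\ leB p.2 q.2.

Definition chain2_le (a b : bool) : Prop := a ==> b.

(* prism: B(w) ~ B x X, B a nontrivial boolean algebra
   (complemented distributive lattice with top and bottom, \bot <> \top),
   X a poset *)
Definition prism (n : nat) (w : 'S_n) : Prop :=
  exists (d : Order.disp_t) (B : ctbDistrLatticeType d)
         (d' : Order.disp_t) (X : porderType d'),
    (Order.bottom : B) <> Order.top /\
    order_iso (@Bideal_le n w)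
      (prod_le (fun a b : B => (a <= b)%O) (fun a b : X => (a <= b)%O)).

(* A reduced word of y has length ninv y, the number of inversions of y, and the Bruhat
   order is generated by the moves x -> x (p q) that create an inversion; so B(w) is graded
   by ninv and ninv w is the length of its maximal chains.
   If B(w) ~ B * X with B a nontrivial Boolean algebra, B has an atom b (by descent on ninv)
   and B ~ 2 * [bot, ~b]; hence B(w) ~ 2 * B(v), where v corresponds to (~b, top).  The
   element corresponding to (b, bot) is not 1, so a simple transposition s_i lies below it:
   then s_i <= w but s_i is not below v.  Conversely, 2 is itself a Boolean algebra.
   Finally B(w) ~ 2 * B(v) forces ninv w = ninv v + 1, so some reduced word of v is a
   subword of one of w with a single letter deleted, which is then the only letter of
   supp w missing from supp v. *)

From HB Require Import structures.
From mathcomp Require Import all_boot all_order all_fingroup zify boolp.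
Set Implicit Arguments. Unset Strict Implicit. Unset Printing Implicit Defensive.
Import Order.Theory.

Lemma tperm_mulg (T : finType) (s : {perm T}) (x y : T) :
  (tperm x y * s = s * tperm (s x) (s y))%g.
Proof. by rewrite -tpermJ /conjg mulgA mulgV mul1g. Qed.

Lemma subseq_rconsP (T : eqType) (t u : seq T) c : subseq t (rcons u c) ->
  subseq t u \/ exists2 t0, t = rcons t0 c & subseq t0 u.
Proof.
rewrite -subseq_rev rev_rcons; case Et: (rev t) => [|d r] /=.
  by move=> _; left; rewrite -[t]revK Et sub0seq.
case: eqP => [dc|_] sub; last by left; rewrite -subseq_rev Et.
right; exists (rev r); last by rewrite -subseq_rev revK.
by rewrite -[t]revK Et rev_cons dc.
Qed.

Lemma subseq_sizeS (T : eqType) (u u' : seq T) :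
  subseq u u' -> size u' = (size u).+1 ->
  exists u1 c u2, u' = u1 ++ c :: u2 /\ u = u1 ++ u2.
Proof.
elim: u' u => [|d r IH] [|e s] //=.
- by case: r {IH} => [|//] _ _; exists [::], d, [::].
- case: eqP => [-> sub [size_r]|_ sub [size_r]].
    have [u1 [c [u2 [E1 E2]]]] := IH _ sub size_r.
    by exists (d :: u1), c, u2; rewrite E1 E2.
  have [_] := size_subseq_leqif sub; rewrite /= size_r eqxx => /esym/eqP <-.
  by exists [::], d, (e :: s).
Qed.

Section SymmetricGroup.
Variable n : nat.
Implicit Types (u t : seq nat) (x y z : 'S_n).
Local Notation wp := (word_perm n).

Lemma stranspE c : 0 < c < n -> exists a b : 'I_n,
  [/\ b = a.+1 :> nat, b = c :> nat & stransp n c = tperm a b].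
Proof.
case: n => [|m] /=; first lia.
by move=> c_lt; exists (inord c.-1), (inord c); split; rewrite ?inordK //; lia.
Qed.

Lemma stransp_adj (a b : 'I_n) : b = a.+1 :> nat -> stransp n b = tperm a b.
Proof.
move=> ab; have b_lt : 0 < b < n by rewrite ltn_ord ab.
have [a' [b' [ab' b'b ->]]] := stranspE b_lt.
by congr tperm; apply: val_inj => /=; lia.
Qed.

Lemma word_perm_nil : wp [::] = 1%g.
Proof. by rewrite /word_perm big_nil. Qed.

Lemma word_perm_cat u t : wp (u ++ t) = (wp t * wp u)%g.
Proof. by rewrite /word_perm rev_cat big_cat. Qed.

Lemma word_perm_seq1 c : wp [:: c] = stransp n c.
Proof. by rewrite /word_perm big_seq1. Qed.

Lemma word_perm_cons c u : wp (c :: u) = (wp u * stransp n c)%g.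
Proof. by rewrite -cat1s word_perm_cat word_perm_seq1. Qed.

Lemma word_perm_rcons u c : wp (rcons u c) = (stransp n c * wp u)%g.
Proof. by rewrite -cats1 word_perm_cat word_perm_seq1. Qed.

Lemma is_word_cat u t : is_word n (u ++ t) = is_word n u && is_word n t.
Proof. exact: all_cat. Qed.

Lemma is_word_rcons u c : is_word n (rcons u c) = is_word n u && (0 < c < n).
Proof. by rewrite -cats1 is_word_cat /is_word /= andbT. Qed.

Lemma is_word_subseq t u : subseq t u -> is_word n u -> is_word n t.
Proof. by move=> /mem_subseq sub /allP u_w; apply/allP => c /sub /u_w. Qed.

Lemma ltn_tperm_adj (a b p q : 'I_n) : b = a.+1 :> nat ->
  (p, q) != (a, b) -> (p, q) != (b, a) ->
  (tperm a b p < tperm a b q) = (p < q).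
Proof.
move=> ab; rewrite !xpair_eqE.
do 2!case: tpermP => [?|?|/(contra_not (@val_inj _ _ _ _ _)) ?
                          /(contra_not (@val_inj _ _ _ _ _)) ?];
  by subst; rewrite -!(inj_eq val_inj); simpl in *; lia.
Qed.

Lemma strong_exchange u (p q : 'I_n) : is_word n u -> p < q -> wp u q < wp u p ->
  exists u1 c u2, u = u1 ++ c :: u2 /\ (tperm p q * wp u)%g = wp (u1 ++ u2).
Proof.
elim/last_ind: u p q => [|u c IH] p q; first by rewrite word_perm_nil !perm1; lia.
rewrite is_word_rcons => /andP [u_w c_lt] pq.
have [a [b [ab bc st]]] := stranspE c_lt.
rewrite word_perm_rcons st !permM.
have [[-> ->] _|ab_pq] := eqVneq (p, q) (a, b).
  exists u, c, [::]; split; first by rewrite cats1.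
  by rewrite cats0 mulgA tperm2 mul1g.
have ba_pq : (p, q) != (b, a) by apply: contraTneq pq => -[-> ->]; lia.
have pq' : tperm a b p < tperm a b q by rewrite ltn_tperm_adj.
move=> /(IH _ _ u_w pq') [u1 [d [u2 [-> E]]]].
exists u1, d, (rcons u2 c); rewrite rcons_cat; split => //.
by rewrite -rcons_cat !word_perm_rcons -E st !mulgA tperm_mulg.
Qed.

Lemma perm_adj_neq (a b : 'I_n) y : b = a.+1 :> nat -> (y a != y b :> nat).
Proof. by move=> ab; apply/eqP => /val_inj/perm_inj ba; move: ab; rewrite ba; lia. Qed.

Definition ninv y : nat := \sum_(p : 'I_n * 'I_n) ((p.1 < p.2) && (y p.2 < y p.1)).

Lemma ninv1 : ninv 1 = 0.
Proof. by rewrite /ninv big1 // => p _; rewrite !perm1; case: ltngtP. Qed.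

Lemma ninv_mul_adj (a b : 'I_n) y : b = a.+1 :> nat ->
  ninv (tperm a b * y) + (y b < y a) = ninv y + (y a < y b).
Proof.
move=> ab; set s := tperm a b.
have s_inj : injective (fun p : 'I_n * 'I_n => (s p.1, s p.2)).
  by move=> [? ?] [? ?] [/perm_inj -> /perm_inj ->].
have -> : ninv (s * y) = \sum_(p : 'I_n * 'I_n) ((s p.1 < s p.2) && (y p.2 < y p.1)).
  by rewrite /ninv (reindex_inj s_inj); apply: eq_bigr => p _; rewrite !permM !tpermK.
have ba_ab : (b, a) != (a, b) by rewrite xpair_eqE -!(inj_eq val_inj) /=; lia.
rewrite /ninv (bigD1 (a, b)) // (bigD1 (b, a)) //= [in RHS](bigD1 (a, b)) //.
rewrite [in RHS](bigD1 (b, a)) //=.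
have -> : \sum_(p | (p != (a, b)) && (p != (b, a))) ((s p.1 < s p.2) && (y p.2 < y p.1)) =
    \sum_(p | (p != (a, b)) && (p != (b, a))) ((p.1 < p.2) && (y p.2 < y p.1)).
  by apply: eq_bigr => p /andP [? ?]; rewrite ltn_tperm_adj -?surjective_pairing.
rewrite /s tpermL tpermR.
have [-> ->] : (a < b) = true /\ (b < a) = false by split; lia.
by move: (\sum_(i | _) _) => S; case: (y a < y b); case: (y b < y a) => /=; lia.
Qed.

Lemma ninv_mul_adj_le (a b : 'I_n) y : b = a.+1 :> nat -> y a <= y b ->
  ninv (tperm a b * y) = (ninv y).+1.
Proof.
move=> ab le_ab; have := ninv_mul_adj y ab.
have lt_ab : y a < y b by rewrite ltn_neqAle le_ab perm_adj_neq.
by rewrite lt_ab ltnNge ltnW //= addn0 addn1.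
Qed.

Lemma ninv_mul_adj_ge (a b : 'I_n) y : b = a.+1 :> nat -> y b <= y a ->
  ninv y = (ninv (tperm a b * y)).+1.
Proof.
move=> ab le_ba; rewrite -{1}[y](tpermKg a b) ninv_mul_adj_le //.
by rewrite !permM tpermL tpermR.
Qed.

Lemma ninv_word_perm_le u : is_word n u -> ninv (wp u) <= size u.
Proof.
elim/last_ind: u => [|u c IH]; first by rewrite word_perm_nil ninv1.
rewrite is_word_rcons size_rcons word_perm_rcons => /andP [/IH le_u c_lt].
have [a [b [ab _ ->]]] := stranspE c_lt.
have [asc|desc] := leqP (wp u a) (wp u b).
  by rewrite ninv_mul_adj_le.
by rewrite (ninv_mul_adj_ge ab (ltnW desc)) in le_u; exact/leqW/ltnW.
Qed.

Lemma perm_ascents_eq1 y : (forall a b : 'I_n, b = a.+1 :> nat -> y a < y b) -> y = 1%g.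
Proof.
move=> asc.
have le_y (i : 'I_n) : i <= y i.
  case: i => i; elim: i => [//|i IH] lt_in.
  have lt_in' : i < n by lia.
  by have := asc (Ordinal lt_in') (Ordinal lt_in) erefl; have := IH lt_in'; rewrite /=; lia.
have /leqif_sum sum_le : forall i : 'I_n, true -> i <= y i ?= iff (i == y i :> nat).
  by move=> i _; exact/leqif_eq/le_y.
have : \sum_(i : 'I_n) (i : nat) == \sum_(i : 'I_n) (y i : nat).
  by rewrite (reindex_inj (@perm_inj _ y)).
rewrite sum_le => /forallP fixed; apply/permP => i; rewrite perm1.
by apply/val_inj/esym/eqP; exact: fixed.
Qed.

Lemma perm_adj_descent y : y != 1%g ->
  exists a b : 'I_n, b = a.+1 :> nat /\ y b < y a.
Proof.
apply: contraNP => no_desc; apply/eqP/perm_ascents_eq1 => a b ab.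
rewrite ltn_neqAle perm_adj_neq // leqNgt.
by apply/negP => ba; apply: no_desc; exists a, b.
Qed.

Lemma word_of_ninv y : exists u, [/\ is_word n u, wp u = y & size u = ninv y].
Proof.
have [k] := ubnP (ninv y); elim: k y => [//|k IH] y le_k.
have [->|/perm_adj_descent [a [b [ab desc]]]] := eqVneq y 1%g.
  by exists [::]; rewrite word_perm_nil ninv1.
have ninv_by := ninv_mul_adj_ge ab (ltnW desc).
have [|u [u_w E size_u]] := IH (tperm a b * y)%g; first by rewrite -ltnS -ninv_by.
exists (rcons u b); split.
- by rewrite is_word_rcons u_w /=; have := ltn_ord b; lia.
- by rewrite word_perm_rcons E (stransp_adj ab) mulgA tperm2 mul1g.
- by rewrite size_rcons size_u ninv_by.
Qed.

Lemma reducedP y u :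
  reduced_word y u <-> [/\ is_word n u, wp u = y & size u = ninv y].
Proof.
split=> [[u_w [E min_u]]|[u_w E size_u]].
  split=> //; have [u' [u'_w E' size_u']] := word_of_ninv y.
  by apply/eqP; rewrite eqn_leq -{1}size_u' min_u //= -E ninv_word_perm_le.
by split=> // ; split=> // u' u'_w E'; rewrite size_u -E' ninv_word_perm_le.
Qed.

Lemma reduced_exists y : exists u, reduced_word y u.
Proof. by have [u ?] := word_of_ninv y; exists u; apply/reducedP. Qed.

Lemma reduced_prefix y u1 u2 : reduced_word y (u1 ++ u2) -> reduced_word (wp u1) u1.
Proof.
case; rewrite is_word_cat => /andP [u1_w u2_w] [E min_u].
split=> //; split=> // u' u'_w E'.
have := min_u (u' ++ u2); rewrite is_word_cat u'_w u2_w !size_cat leq_add2r.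
by apply; rewrite // word_perm_cat E' -word_perm_cat.
Qed.

Lemma reduced_rcons_ascent y u c : reduced_word y (rcons u c) ->
  exists a b : 'I_n,
    [/\ b = a.+1 :> nat, b = c :> nat, stransp n c = tperm a b & wp u a < wp u b].
Proof.
move/reducedP => [+ <-]; rewrite is_word_rcons size_rcons word_perm_rcons.
move=> /andP [u_w c_lt]; have [a [b [ab bc st]]] := stranspE c_lt.
rewrite st => size_u; exists a, b; split => //.
rewrite ltnNge; apply: contraTN (ninv_word_perm_le u_w) => desc.
by rewrite -ltnNge (ninv_mul_adj_ge ab desc) -size_u ltnS leqnSn.
Qed.

Lemma reduced_or_descent u : is_word n u -> ninv (wp u) = size u \/
  exists u1 c u2 (a b : 'I_n), [/\ u = u1 ++ c :: u2, b = a.+1 :> nat,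
    stransp n c = tperm a b & wp u1 b < wp u1 a].
Proof.
elim/last_ind: u => [|u c IH]; first by left; rewrite word_perm_nil ninv1.
rewrite is_word_rcons => /andP [u_w c_lt].
have [ninv_u|[u1 [d [u2 [a [b [-> ab st desc]]]]]]] := IH u_w; last first.
  by right; exists u1, d, (rcons u2 c), a, b; rewrite rcons_cat.
have [a [b [ab bc st]]] := stranspE c_lt.
have [desc|asc] := ltnP (wp u b) (wp u a).
  by right; exists u, c, [::], a, b; rewrite cats1.
by left; rewrite word_perm_rcons size_rcons st ninv_mul_adj_le // ninv_u.
Qed.

Lemma reduced_subword u : is_word n u -> exists2 t, subseq t u & reduced_word (wp u) t.
Proof.
have [k] := ubnP (size u); elim: k u => [//|k IH] u size_u u_w.
have [ninv_u|[u1 [c [u2 [a [b [Eu ab st desc]]]]]]] := reduced_or_descent u_w.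
  by exists u => //; apply/reducedP.
have u1_w : is_word n u1 by move: u_w; rewrite Eu is_word_cat => /andP [].
have ltab : a < b by rewrite ab.
have [v1 [d [v2 [Eu1 E]]]] := strong_exchange u1_w ltab desc.
have sub : subseq ((v1 ++ v2) ++ u2) u.
  by rewrite Eu Eu1; apply: cat_subseq; [apply: cat_subseq|]; rewrite ?subseq_cons.
have [|t sub_t red_t] := IH _ _ (is_word_subseq sub u_w).
  by move: size_u; rewrite Eu Eu1 !size_cat /=; lia.
exists t; first exact: subseq_trans sub_t sub.
by rewrite Eu word_perm_cat word_perm_cons st -mulgA E -word_perm_cat.
Qed.

(* [tperm p q * x] is [x] with the entries in positions [p] and [q] swapped: the step
   adds an inversion, and these steps generate the Bruhat order (see [bruhat_leP]). *)
Inductive bruhat_chain : 'S_n -> 'S_n -> Prop :=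
| bruhat_chain_refl x : bruhat_chain x x
| bruhat_chain_step x (p q : 'I_n) z : p < q -> x p < x q ->
    bruhat_chain (tperm p q * x) z -> bruhat_chain x z.

Lemma bruhat_chain_trans x y z :
  bruhat_chain x y -> bruhat_chain y z -> bruhat_chain x z.
Proof. by elim=> // {}x p q {}y pq xpq _ IH /IH; apply: bruhat_chain_step. Qed.

Lemma bruhat_chain1 x (p q : 'I_n) : p < q -> x p < x q -> bruhat_chain x (tperm p q * x).
Proof. by move=> pq xpq; apply: bruhat_chain_step pq xpq (bruhat_chain_refl _). Qed.

Lemma bruhat_chain_lift x y (a b : 'I_n) : b = a.+1 :> nat ->
  bruhat_chain x y -> y a < y b -> bruhat_chain (tperm a b * x) (tperm a b * y).
Proof.
move=> ab; elim=> [{}x _|{}x p q z pq xpq chain IH asc]; first exact: bruhat_chain_refl.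
have [[Ep Eq]|ab_pq] := eqVneq (p, q) (a, b).
  by subst; apply: bruhat_chain_trans chain (bruhat_chain1 pq asc).
have ba_pq : (p, q) != (b, a) by apply: contraTneq pq => -[-> ->]; lia.
apply: (bruhat_chain_step (p := tperm a b p) (q := tperm a b q)).
- by rewrite ltn_tperm_adj.
- by rewrite !permM !tpermK.
- by rewrite mulgA (tperm_mulg (tperm a b)) !tpermK -mulgA; exact: IH.
Qed.

Lemma subword_bruhat_chain u t : reduced_word (wp u) u -> subseq t u ->
  reduced_word (wp t) t -> bruhat_chain (wp t) (wp u).
Proof.
elim/last_ind: u t => [|u c IH] t red_u.
  by rewrite subseq0 => /eqP -> _; exact: bruhat_chain_refl.
have [a [b [ab bc st asc]]] := reduced_rcons_ascent red_u.
have red_prefix v : reduced_word (wp (rcons v c)) (rcons v c) -> reduced_word (wp v) v.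
  by rewrite -cats1; apply: reduced_prefix.
have lt_ab : a < b by rewrite ab.
rewrite word_perm_rcons st; case/subseq_rconsP => [sub_t red_t|[t0 -> sub_t0] red_t].
  exact: bruhat_chain_trans (IH _ (red_prefix _ red_u) sub_t red_t) (bruhat_chain1 lt_ab asc).
rewrite word_perm_rcons st; apply: bruhat_chain_lift ab _ asc.
exact: IH (red_prefix _ red_u) sub_t0 (red_prefix _ red_t).
Qed.

Lemma bruhat_chain_subword x y u : bruhat_chain x y -> is_word n u -> wp u = y ->
  exists2 t, subseq t u & wp t = x.
Proof.
elim=> [{}x|{}x p q z pq xpq _ IH] u_w E; first by exists u.
have [t sub_t Et] := IH u_w E.
have desc : wp t q < wp t p by rewrite Et !permM tpermL tpermR.
have [t1 [d [t2 [Et1 E']]]] := strong_exchange (is_word_subseq sub_t u_w) pq desc.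
exists (t1 ++ t2); last by rewrite -E' Et mulgA tperm2 mul1g.
by apply: subseq_trans sub_t; rewrite Et1 cat_subseq // subseq_cons.
Qed.

Lemma bruhat_leP x y : bruhat_le x y <-> bruhat_chain x y.
Proof.
split=> [[u [u' [red_u red_u' sub]]]|chain].
  have [_ Ex _] := iffLR (reducedP _ _) red_u; have [_ Ey _] := iffLR (reducedP _ _) red_u'.
  by subst x y; exact: subword_bruhat_chain.
have [u' red_u'] := reduced_exists y; have [u'_w E _] := iffLR (reducedP _ _) red_u'.
have [t sub_t <-] := bruhat_chain_subword chain u'_w E.
have [t' sub_t' red_t'] := reduced_subword (is_word_subseq sub_t u'_w).
by exists t', u'; split=> //; exact: subseq_trans sub_t' sub_t.
Qed.

Lemma bruhat_le_refl x : bruhat_le x x.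
Proof. exact/bruhat_leP/bruhat_chain_refl. Qed.

Lemma bruhat_le_trans x y z : bruhat_le x y -> bruhat_le y z -> bruhat_le x z.
Proof.
by move=> /bruhat_leP xy /bruhat_leP yz; apply/bruhat_leP; exact: bruhat_chain_trans xy yz.
Qed.

Lemma bruhat_le_ninv x y : bruhat_le x y -> ninv x <= ninv y ?= iff (x == y).
Proof.
case=> u [u' [/reducedP [_ Ex size_u] /reducedP [_ Ey size_u'] sub]].
rewrite -size_u -size_u'; have [le_size eq_size] := size_subseq_leqif sub.
split=> //; rewrite eq_size; apply/eqP/eqP => [uu'|xy]; first by rewrite -Ex -Ey uu'.
by apply/eqP; rewrite -eq_size size_u size_u' xy.
Qed.

Lemma bruhat_le_anti x y : bruhat_le x y -> bruhat_le y x -> x = y.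
Proof.
move=> /bruhat_le_ninv [le_xy eq_xy] /bruhat_le_ninv [le_yx _].
by apply/eqP; rewrite -eq_xy eqn_leq le_xy le_yx.
Qed.

Lemma bruhat_lt_ninv x y : bruhat_le x y -> x <> y -> ninv x < ninv y.
Proof. by move=> /bruhat_le_ninv/ltn_leqif -> /eqP. Qed.

Lemma bruhat_le1 y : bruhat_le 1 y.
Proof.
have [u red_u] := reduced_exists y; exists [::], u; split=> //; last exact: sub0seq.
by apply/reducedP; rewrite word_perm_nil ninv1.
Qed.

Lemma ninv_stransp i : 0 < i < n -> ninv (stransp n i) = 1.
Proof.
move=> /stranspE [a [b [ab _ ->]]].
by rewrite -[tperm a b]mulg1 ninv_mul_adj_le ?ninv1 // !perm1 ab.
Qed.

Lemma reduced_stransp i : 0 < i < n -> reduced_word (stransp n i) [:: i].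
Proof.
by move=> i_lt; apply/reducedP; rewrite word_perm_seq1 ninv_stransp // /is_word /= i_lt.
Qed.

Lemma stransp_inj i k : 0 < i < n -> 0 < k < n -> stransp n i = stransp n k -> i = k.
Proof.
move=> /stranspE [a [b [ab <- ->]]] /stranspE [c [d [cd <- ->]]] E.
have := congr1 (fun s : 'S_n => val (s a)) E; have := congr1 (fun s : 'S_n => val (s b)) E.
rewrite /= tpermL tpermR.
by do 2!case: tpermP => [?|?|/(contra_not (@val_inj _ _ _ _ _)) ?
                             /(contra_not (@val_inj _ _ _ _ _)) ?]; subst; lia.
Qed.

Lemma reduced_stransp_uniq i t : 0 < i < n -> reduced_word (stransp n i) t -> t = [:: i].
Proof.
move=> i_lt /reducedP [t_w E]; rewrite ninv_stransp //.
case: t t_w E => [|k [|//]] //= /andP [k_lt _]; rewrite word_perm_seq1.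
by move=> /(stransp_inj k_lt i_lt) ->.
Qed.

Lemma supp_letter y i : supp y i -> 0 < i < n.
Proof. by case=> u /reducedP [/allP u_w _ _] /u_w. Qed.

Lemma suppP y i : supp y i <-> 0 < i < n /\ bruhat_le (stransp n i) y.
Proof.
split=> [supp_i|[i_lt [t [u [red_t red_u sub]]]]].
  have i_lt := supp_letter supp_i; split=> //.
  case: supp_i => u red_u u_i; exists [:: i], u; split=> //; first exact: reduced_stransp.
  by rewrite sub1seq.
by exists u; rewrite // -sub1seq -(reduced_stransp_uniq i_lt red_t).
Qed.

Lemma supp_mem_reduced y i u : supp y i -> reduced_word y u -> i \in u.
Proof.
move=> /suppP [i_lt /bruhat_leP chain] /reducedP [u_w E _].
have [t sub_t Et] := bruhat_chain_subword chain u_w E.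
have [t' sub_t' red_t'] := reduced_subword (is_word_subseq sub_t u_w).
rewrite Et in red_t'; rewrite (reduced_stransp_uniq i_lt red_t') sub1seq in sub_t'.
exact: (mem_subseq sub_t) sub_t'.
Qed.

Lemma supp_exists y : y != 1%g -> exists i, supp y i.
Proof.
have [[|i u] red_u] := reduced_exists y; last by exists i, (i :: u); rewrite ?mem_head.
by have [_ <- _] := iffLR (reducedP _ _) red_u; rewrite word_perm_nil eqxx.
Qed.

End SymmetricGroup.

Section OrderIso.
Variables (A B : Type) (leA : A -> A -> Prop) (leB : B -> B -> Prop).

Lemma order_iso_sym : order_iso leA leB -> order_iso leB leA.
Proof.
case=> f [[g fK gK] f_le]; exists g; split; first by exists f.
by move=> x y; rewrite f_le !gK.
Qed.

Lemma order_iso_eqr (leB' : B -> B -> Prop) : (forall x y, leB x y <-> leB' x y) ->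
  order_iso leA leB -> order_iso leA leB'.
Proof. by move=> eq_le [f [f_bij f_le]]; exists f; split=> // x y; rewrite f_le eq_le. Qed.

Lemma rank_chain (f : A -> B) (r : B -> nat) (c : nat -> A) K :
  injective f -> (forall x y, leA x y -> leB (f x) (f y)) ->
  (forall x y, leB x y -> x <> y -> r x < r y) ->
  (forall k, k < K -> leA (c k) (c k.+1) /\ c k <> c k.+1) ->
  r (f (c 0)) + K <= r (f (c K)).
Proof.
move=> f_inj f_le r_lt; elim: K => [|K IH] c_lt; first by rewrite addn0.
have [le_K neq_K] := c_lt K (ltnSn K).
have := r_lt _ _ (f_le _ _ le_K) (fun E => neq_K (f_inj _ _ E)).
by have := IH (fun k lt_k => c_lt k (ltnW lt_k)); lia.
Qed.
End OrderIso.

Lemma Bideal_val_inj n (w : 'S_n) : injective (@proj1_sig _ _ : Bideal w -> 'S_n).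
Proof. by move=> [x px] [y py] /= E; exact: eq_exist. Qed.

(* [Bideal w] is a subtype by a Prop, so its equality and choice are classical. *)
HB.instance Definition _ n (w : 'S_n) := gen_eqMixin (Bideal w).
HB.instance Definition _ n (w : 'S_n) := gen_choiceMixin (Bideal w).

Lemma Bideal_ninv_lt n (w : 'S_n) (x y : Bideal w) :
  Bideal_le x y -> x <> y -> ninv (proj1_sig x) < ninv (proj1_sig y).
Proof.
by move=> le_xy neq_xy; apply: bruhat_lt_ninv le_xy (contra_not (@Bideal_val_inj _ _ _ _) neq_xy).
Qed.

Lemma prod_Bideal_rank_lt n (v : 'S_n) (p q : bool * Bideal v) :
  prod_le chain2_le (@Bideal_le n v) p q -> p <> q ->
  p.1 + ninv (proj1_sig p.2) < q.1 + ninv (proj1_sig q.2).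
Proof.
case: p q => [e x] [e' y] [/= le_e le_xy] neq /=.
have [xy|/eqP neq_xy] := eqVneq x y.
  by move: le_e neq; rewrite xy; case: e; case: e'.
by have := Bideal_ninv_lt le_xy neq_xy; move: le_e {neq}; case: e; case: e' => //=; lia.
Qed.

Section PrefixChain.
Variables (n : nat) (y : 'S_n) (u : seq nat).
Hypothesis red_u : reduced_word y u.

Lemma reduced_take k : reduced_word (word_perm n (take k u)) (take k u).
Proof. by apply: (@reduced_prefix _ y _ (drop k u)); rewrite cat_take_drop. Qed.

Lemma ninv_take k : ninv (word_perm n (take k u)) = minn k (size u).
Proof. by have /reducedP [_ _ <-] := reduced_take k; rewrite size_take_min minnC. Qed.

Lemma bruhat_le_take k : bruhat_le (word_perm n (take k u)) y.
Proof. by exists (take k u), u; split=> //; [exact: reduced_take | exact: take_subseq]. Qed.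

Definition prefix_chain k : Bideal y := exist (fun x => bruhat_le x y) _ (bruhat_le_take k).

Lemma prefix_chain_le k : Bideal_le (prefix_chain k) (prefix_chain k.+1).
Proof.
exists (take k u), (take k.+1 u); split; try exact: reduced_take.
by rewrite -addn1 takeD prefix_subseq.
Qed.

Lemma prefix_chain_neq k : k < size u -> prefix_chain k <> prefix_chain k.+1.
Proof. by move=> lt_k /(congr1 (fun x => ninv (proj1_sig x))) /=; rewrite !ninv_take; lia. Qed.
End PrefixChain.

Arguments prefix_chain_le {n y u} red_u k.
Arguments prefix_chain_neq {n y u} red_u {k}.

Section OrderIsoNinv.
Variables (n : nat) (w v : 'S_n).
Hypothesis iso : order_iso (@Bideal_le n w) (prod_le chain2_le (@Bideal_le n v)).

Lemma order_iso_ninv_le : ninv w <= (ninv v).+1.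
Proof.
case: iso => f [/bij_inj f_inj f_le]; have [u red_u] := reduced_exists w.
have := rank_chain f_inj (fun x y => iffLR (f_le x y)) (@prod_Bideal_rank_lt n v)
  (fun k lt_k => conj (prefix_chain_le red_u k) (prefix_chain_neq red_u lt_k)).
case: (f (prefix_chain red_u (size u))) => e [x /bruhat_le_ninv [le_x _]] /=.
by have /reducedP [_ _ <-] := red_u; case: e => /=; lia.
Qed.

Lemma order_iso_ninv_ge : (ninv v).+1 <= ninv w.
Proof.
case: (order_iso_sym iso) => g [/bij_inj g_inj g_le]; have [u red_u] := reduced_exists v.
pose c k := (size u < k, prefix_chain red_u k).
have c_lt k : k < (size u).+1 ->
    prod_le chain2_le (@Bideal_le n v) (c k) (c k.+1) /\ c k <> c k.+1.
  move=> lt_k; split; first by split; [apply/implyP => /=; lia | exact: prefix_chain_le].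
  have [lt_ku|] := ltnP k (size u).
    by move=> /(congr1 snd); apply: (prefix_chain_neq red_u lt_ku).
  move=> ge_ku; have -> : k = size u by lia.
  by move=> /(congr1 fst); rewrite /= ltnn ltnSn.
have := rank_chain g_inj (fun x y => iffLR (g_le x y)) (@Bideal_ninv_lt n w) c_lt.
have [le_top _] := bruhat_le_ninv (proj2_sig (g (c (size u).+1))).
by have /reducedP [_ _ <-] := red_u; lia.
Qed.

Lemma order_iso_ninv : ninv w = (ninv v).+1.
Proof. by apply/eqP; rewrite eqn_leq order_iso_ninv_le order_iso_ninv_ge. Qed.
End OrderIsoNinv.

Lemma bruhat_cover_reduced n (v w : 'S_n) : bruhat_le v w -> ninv w = (ninv v).+1 ->
  exists u1 c u2, reduced_word w (u1 ++ c :: u2) /\ reduced_word v (u1 ++ u2).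
Proof.
case=> u [u' [red_u red_u' sub]] ninv_w.
have /reducedP [_ _ size_u] := red_u; have /reducedP [_ _ size_u'] := red_u'.
have [|u1 [c [u2 [Eu' Eu]]]] := subseq_sizeS sub; first by rewrite size_u size_u'.
by exists u1, c, u2; rewrite -Eu' -Eu.
Qed.

Lemma supp_deleted_letter n (v w : 'S_n) u1 c u2 j :
  reduced_word w (u1 ++ c :: u2) -> reduced_word v (u1 ++ u2) ->
  supp w j -> ~ supp v j -> j = c.
Proof.
move=> red_w red_v /supp_mem_reduced /(_ red_w); rewrite !mem_cat inE.
case/or3P => [j_u1|/eqP //|j_u2] []; exists (u1 ++ u2) => //.
  by rewrite mem_cat j_u1.
by rewrite mem_cat j_u2 orbT.
Qed.

Definition Bideal_leb n (w : 'S_n) (x y : Bideal w) : bool := `[< Bideal_le x y >].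

Fact Bideal_display : Order.disp_t. Proof. exact: Order.Disp tt tt. Qed.

Section BidealPOrder.
Variables (n : nat) (w : 'S_n).

Lemma Bideal_leb_refl : reflexive (@Bideal_leb n w).
Proof. by move=> x; apply/asboolP; exact: bruhat_le_refl. Qed.

Lemma Bideal_leb_anti : antisymmetric (@Bideal_leb n w).
Proof.
move=> x y /andP [/asboolP le_xy /asboolP le_yx].
exact/Bideal_val_inj/bruhat_le_anti.
Qed.

Lemma Bideal_leb_trans : transitive (@Bideal_leb n w).
Proof.
by move=> y x z /asboolP le_xy /asboolP le_yz; apply/asboolP; exact: bruhat_le_trans le_yz.
Qed.

HB.instance Definition _ := Order.Le_isPOrder.Build Bideal_display (Bideal w)
  Bideal_leb_refl Bideal_leb_anti Bideal_leb_trans.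
End BidealPOrder.

Lemma prism_of_order_iso n (w v : 'S_n) :
  order_iso (@Bideal_le n w) (prod_le chain2_le (@Bideal_le n v)) -> prism w.
Proof.
move=> iso; exists _, bool, Bideal_display, (Bideal v); split=> //.
apply: order_iso_eqr iso => -[e x] [e' y]; rewrite /prod_le /=.
have -> : chain2_le e e' <-> (e <= e')%O by case: e; case: e'.
by split=> -[le_e le_xy]; split=> //; apply/asboolP.
Qed.

Section Atom.
Local Open Scope order_scope.
Context {d : Order.disp_t} {L : ctbDistrLatticeType d}.
Implicit Types c : L.

Definition atom (b : L) : Prop := b <> \bot /\ forall c, c <= b -> c = \bot \/ c = b.

Variable b : L.
Hypothesis atom_b : atom b.

Definition atom_split c : bool * L := (b <= c, c `&` ~` b).
Definition atom_glue (p : bool * L) : L := (if p.1 then b else \bot) `|` p.2.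

Lemma meet_atom c : ~~ (b <= c) -> c `&` b = \bot.
Proof.
move=> nle_bc; have [//|E] := atom_b.2 _ (leIr b c).
by move: nle_bc; rewrite -E leIl.
Qed.

Lemma atom_nle_compl : ~~ (b <= ~` b).
Proof. by apply/negP => /meet_idPl E; apply: atom_b.1; rewrite -E meetxC. Qed.

Lemma atom_splitK : cancel atom_split atom_glue.
Proof.
move=> c; rewrite /atom_glue /=; have [le_bc|nle_bc] := boolP (b <= c).
  by rewrite -{1}(meet_idPr le_bc) -meetUr joinxC meetx1.
by rewrite -(meet_atom nle_bc) -meetUr joinxC meetx1.
Qed.

Lemma atom_glueK e c : c <= ~` b -> atom_split (atom_glue (e, c)) = (e, c).
Proof.
move=> le_c; rewrite /atom_split /atom_glue /=; congr pair.
  case: e; first exact: leUl.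
  by rewrite join0x; apply/negbTE; apply: contraNN atom_nle_compl => /le_trans; apply.
by rewrite meetUl (meet_idPl le_c); case: e; rewrite ?meetxC ?meet0x join0x.
Qed.

Lemma le_atom_split c c' : c <= c' <->
  ((atom_split c).1 ==> (atom_split c').1) /\ (atom_split c).2 <= (atom_split c').2.
Proof.
rewrite /atom_split /=; split=> [le_cc'|[/implyP le_b le_nb]].
  by split; [apply/implyP => /le_trans; apply | exact: leI2].
rewrite -(atom_splitK c) /atom_glue /= leUx; apply/andP; split.
  by case: ifP => [/le_b //|_]; rewrite le0x.
exact: le_trans le_nb (leIl _ _).
Qed.
End Atom.

Definition Bideal_top n (w : 'S_n) : Bideal w :=
  exist (fun x => bruhat_le x w) w (bruhat_le_refl w).
Definition Bideal_bot n (w : 'S_n) : Bideal w :=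
  exist (fun x => bruhat_le x w) 1%g (bruhat_le1 w).

Section PrismBase.
Local Open Scope order_scope.
Variables (n : nat) (w : 'S_n) (d : Order.disp_t) (B : ctbDistrLatticeType d)
  (d' : Order.disp_t) (X : porderType d').
Variables (f : Bideal w -> B * X) (g : B * X -> Bideal w).
Hypotheses (fK : cancel f g) (gK : cancel g f).
Hypothesis f_le : forall x y,
  Bideal_le x y <-> (f x).1 <= (f y).1 /\ (f x).2 <= (f y).2.

Lemma g_le p q : Bideal_le (g p) (g q) <-> p.1 <= q.1 /\ p.2 <= q.2.
Proof. by rewrite f_le !gK. Qed.

Lemma le_f_top p : p.1 <= (f (Bideal_top w)).1 /\ p.2 <= (f (Bideal_top w)).2.
Proof. by have := proj1 (f_le (g p) (Bideal_top w)) (proj2_sig (g p)); rewrite gK. Qed.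

Lemma le_f_bot p : (f (Bideal_bot w)).1 <= p.1 /\ (f (Bideal_bot w)).2 <= p.2.
Proof. by have := proj1 (f_le (Bideal_bot w) (g p)) (bruhat_le1 _); rewrite gK. Qed.

Lemma f_top1 : (f (Bideal_top w)).1 = \top.
Proof. by apply: le_anti; rewrite lex1 (le_f_top (\top, (f (Bideal_top w)).2)).1. Qed.

Lemma f_bot0 : (f (Bideal_bot w)).1 = \bot.
Proof. by apply: le_anti; rewrite le0x andbT (le_f_bot (\bot, (f (Bideal_bot w)).2)).1. Qed.

Lemma exists_atom : (\bot : B) <> \top -> exists b : B, atom b.
Proof.
move=> bot_top; pose rank c := ninv (proj1_sig (g (c, (f (Bideal_bot w)).2))).
suff: forall k c, c <> \bot -> (rank c < k)%N -> exists b : B, atom b.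
  by move/(_ _ \top (nesym bot_top) (ltnSn _)).
elim=> [//|k IH] c c_neq0 lt_k.
have [min_c|/existsNP [c' /not_implyP [le_c' /not_orP [c'_neq0 c'_neq]]]] :=
  pselect (forall c', c' <= c -> c' = \bot \/ c' = c); first by exists c.
apply: (IH c' c'_neq0); have: (rank c' < rank c)%N; last lia.
by apply: Bideal_ninv_lt; [apply/g_le | move=> /(can_inj gK) []].
Qed.

Variable b : B.
Hypothesis atom_b : atom b.

Definition prism_base : Bideal w := g (~` b, (f (Bideal_top w)).2).
Local Notation v := (proj1_sig prism_base).

Lemma prism_base_le : bruhat_le v w.
Proof. exact: (proj2_sig prism_base). Qed.

Lemma prism_base_neq : v <> w.
Proof.
move=> E; have /(congr1 (fun x => (f x).1)) : prism_base = Bideal_top w.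
  exact: Bideal_val_inj.
rewrite gK f_top1 /= => compl_b.
by apply: atom_b.1; rewrite -[b]complK compl_b compl1.
Qed.

Lemma supp_prism_base : exists i, supp w i /\ ~ supp v i.
Proof.
pose a := g (b, (f (Bideal_bot w)).2).
have a_neq1 : proj1_sig a != 1%g.
  apply/eqP => a1; apply: atom_b.1.
  have /(congr1 (fun x => (f x).1)) : a = Bideal_bot w by exact: Bideal_val_inj.
  by rewrite /a gK f_bot0.
have [i /suppP [i_lt le_ia]] := supp_exists a_neq1.
pose si : Bideal w := exist (fun x => bruhat_le x w) _ (bruhat_le_trans le_ia (proj2_sig a)).
have [le_b le_bot] : (f si).1 <= b /\ (f si).2 <= (f (Bideal_bot w)).2.
  by have := proj1 (f_le si a) le_ia; rewrite /a gK.
have fsi_b : (f si).1 = b.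
  have [fsi0|//] := atom_b.2 _ le_b.
  have : si = Bideal_bot w.
    rewrite -[si]fK -[Bideal_bot w]fK; congr g.
    rewrite [f si]surjective_pairing [f (Bideal_bot w)]surjective_pairing fsi0 f_bot0.
    by congr pair; apply: le_anti; rewrite le_bot (le_f_bot (f si)).2.
  by move=> /(congr1 (fun x => ninv (proj1_sig x))) /=; rewrite ninv_stransp // ninv1.
exists i; split; first by apply/suppP; split=> //; exact: (proj2_sig si).
move=> /suppP [_ le_iv]; have := proj1 (f_le si prism_base) le_iv.
by rewrite gK fsi_b /= => -[le_bnb _]; move: (atom_nle_compl atom_b); rewrite le_bnb.
Qed.

Lemma to_prism_baseP x : bruhat_le (proj1_sig (g ((f x).1 `&` ~` b, (f x).2))) v.
Proof. by apply/g_le; split; [exact: leIr | exact: (le_f_top (f x)).2]. Qed.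

Definition to_prism (x : Bideal w) : bool * Bideal v :=
  (b <= (f x).1, exist (fun y => bruhat_le y v) _ (to_prism_baseP x)).

Definition lift_base (z : Bideal v) : Bideal w :=
  exist (fun y => bruhat_le y w) (proj1_sig z) (bruhat_le_trans (proj2_sig z) prism_base_le).

Definition of_prism (p : bool * Bideal v) : Bideal w :=
  g (atom_glue b (p.1, (f (lift_base p.2)).1), (f (lift_base p.2)).2).

Lemma lift_base_le (z : Bideal v) : (f (lift_base z)).1 <= ~` b.
Proof. by have := proj1 (f_le (lift_base z) prism_base) (proj2_sig z); rewrite gK => -[]. Qed.

Lemma to_prismK : cancel to_prism of_prism.
Proof.
move=> x; rewrite /of_prism /to_prism /=.
have -> : lift_base (exist (fun y => bruhat_le y v) _ (to_prism_baseP x)) =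
          g ((f x).1 `&` ~` b, (f x).2) by exact: Bideal_val_inj.
rewrite gK /= -[RHS]fK; congr g; case: (f x) => c x2 /=.
by congr pair; exact: (atom_splitK atom_b c).
Qed.

Lemma of_prismK : cancel of_prism to_prism.
Proof.
move=> [e z]; case: (atom_glueK atom_b e (lift_base_le z)) => glue1 glue2.
rewrite /to_prism; congr pair; first by rewrite /of_prism gK.
by apply: Bideal_val_inj; rewrite /= /of_prism gK /= glue2 -surjective_pairing fK.
Qed.

Lemma to_prism_le x y :
  Bideal_le x y <-> prod_le chain2_le (@Bideal_le n v) (to_prism x) (to_prism y).
Proof.
rewrite f_le /prod_le /chain2_le (le_atom_split atom_b) /=.
have -> : Bideal_le (to_prism x).2 (to_prism y).2 <->
  Bideal_le (g ((f x).1 `&` ~` b, (f x).2)) (g ((f y).1 `&` ~` b, (f y).2)) by [].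
by rewrite g_le /=; tauto.
Qed.
End PrismBase.

Lemma prism_base_exists n (w : 'S_n) : prism w -> exists v : 'S_n,
  [/\ bruhat_lt v w,
      (forall i, supp v i -> supp w i) /\ (exists i, supp w i /\ ~ supp v i)
    & order_iso (@Bideal_le n w) (prod_le chain2_le (@Bideal_le n v))].
Proof.
case=> d [B [d' [X [bot_top [f [[g fK gK] f_le]]]]]].
have [b atom_b] := exists_atom gK f_le bot_top.
exists (proj1_sig (prism_base f g b)); split.
- by split; [exact: prism_base_neq atom_b | exact: prism_base_le].
- split; last exact: supp_prism_base atom_b.
  move=> i /suppP [i_lt le_iv]; apply/suppP; split=> //.
  exact: bruhat_le_trans le_iv (prism_base_le _ _ _).
- exists (to_prism gK f_le b); split; last exact: to_prism_le.
  by exists (of_prism (b := b)); [exact: to_prismK | exact: of_prismK].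
Qed.

Theorem lemma2p1 (n : nat) (w : 'S_n) :
  (prism w <->
   exists v : 'S_n,
     [/\ bruhat_lt v w,
         (forall i, supp v i -> supp w i) /\ (exists i, supp w i /\ ~ supp v i)
       & order_iso (@Bideal_le n w) (prod_le chain2_le (@Bideal_le n v))])
  /\
  (forall v : 'S_n,
     bruhat_lt v w ->
     (forall i, supp v i -> supp w i) -> (exists i, supp w i /\ ~ supp v i) ->
     order_iso (@Bideal_le n w) (prod_le chain2_le (@Bideal_le n v)) ->
     exists i : nat,
       (forall j, (supp w j /\ ~ supp v j) <-> j = i) /\
       exists u1 u2 : seq nat,
         reduced_word w (u1 ++ i :: u2) /\ reduced_word v (u1 ++ u2)).
Proof.
split.
  split; first exact: prism_base_exists.
  by case=> v [_ _ iso]; exact: prism_of_order_iso iso.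
move=> v [_ le_vw] _ [i [supp_wi nsupp_vi]] iso.
have [u1 [c [u2 [red_w red_v]]]] := bruhat_cover_reduced le_vw (order_iso_ninv iso).
have deleted j := @supp_deleted_letter n v w u1 c u2 j red_w red_v.
exists c; split; last by exists u1, u2.
move=> j; split=> [[]|->]; first exact: deleted.
by rewrite -(deleted i supp_wi nsupp_vi).
Qed.
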